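(* Let $\tau\in(0,1]$ and let $p_1,p_2$ be distributions on a common countable domain (each extended by infinitely many zero-probability elements) satisfying $R_\tau(p_1,p_2)\le\epsilon$. Then there exists a bijection (relabeling) $\pi$ of the domain such that $$\sum_i\big|\max(p_1(i),\tau)-\max(p_2(\pi(i)),\tau)\big|\le 2\epsilon.$$
   Context: The histogram of a distribution $p$ is the map $h_p:(0,1]\to\mathbb{N}\cup\{0\}$, $h_p(x)=|\{a:p(a)=x\}|$; its probability mass at $x$ is $x h_p(x)$. For $\tau\in[0,1]$, $R_\tau(p_1,p_2)=R_\tau(h_{p_1},h_{p_2})$ is the $\tau$-truncated relative earthmover distance: the minimum, over all schemes moving the probability mass of $h_{p_1}$ to yield that of $h_{p_2}$, of the total cost, where moving one unit of mass from probability $x$ to probability $y$ costs $|\log\max(x,\tau)-\log\max(y,\tau)|$. *)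

From Stdlib Require Import Reals List FinFun.
Open Scope R_scope.

Definition distribution (p : nat -> R) : Prop :=
  (forall a, 0 <= p a) /\ infinite_sum p 1.

Definition inf_many_zeros (p : nat -> R) : Prop :=
  forall N : nat, exists a : nat, (N <= a)%nat /\ p a = 0.

(* histogram: hist p x n  <->  h_p(x) = n, i.e. |{a : p a = x}| = n *)
Definition hist (p : nat -> R) (x : R) (n : nat) : Prop :=
  exists l : list nat, NoDup l /\ length l = n /\ (forall a, In a l <-> p a = x).

Definition move_cost (tau x y : R) : R :=
  Rabs (ln (Rmax x tau) - ln (Rmax y tau)).

(* A transport scheme is a countable family of moves: move k transports
   mass w k >= 0 from probability sx k to probability sy k (both in (0,1]).
   It moves the mass of h_{p1} to yield that of h_{p2} when, for every
   x in (0,1], the total mass moved out of x equals x * h_{p1}(x) and the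
   total mass moved into x equals x * h_{p2}(x). *)
Definition scheme_ok (p1 p2 : nat -> R) (sx sy w : nat -> R) : Prop :=
  (forall k, 0 <= w k /\ 0 < sx k <= 1 /\ 0 < sy k <= 1) /\
  (forall x n, 0 < x <= 1 -> hist p1 x n ->
     infinite_sum (fun k => if Req_EM_T (sx k) x then w k else 0) (x * INR n)) /\
  (forall y n, 0 < y <= 1 -> hist p2 y n ->
     infinite_sum (fun k => if Req_EM_T (sy k) y then w k else 0) (y * INR n)).

Definition scheme_cost (tau : R) (sx sy w : nat -> R) (c : R) : Prop :=
  infinite_sum (fun k => w k * move_cost tau (sx k) (sy k)) c.

(* R_tau(p1,p2) <= eps : the minimum (infimum) over schemes of the cost is
   at most eps. *)
Definition R_tau_le (tau : R) (p1 p2 : nat -> R) (eps : R) : Prop :=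
  forall delta, 0 < delta ->
    exists sx sy w c, scheme_ok p1 p2 sx sy w /\ scheme_cost tau sx sy w c /\
                      c <= eps + delta.

From Stdlib Require Import Reals FinFun Lra Lia List Classical.
Open Scope R_scope.

(* Only the finitely many entries above [tau] matter; on them, relabel [p2] so that it is
   sorted like [p1].  Weak duality: for every potential [G] with [G tau = 0] that is
   1-Lipschitz for [ln] on [[tau, oo)], the [G]-weighted mass of [h_p1] minus that of [h_p2]
   is at most the cost of any transport scheme, hence at most [eps].  For the sorted matching
   such a [G] is built descending through the values: between consecutive values [f < f'] it
   has slope [+-1] in [ln] according to the sign of the excess mass above [f'], and the bound
   [(f' - f) / f' <= ln f' - ln f] shows that it pays for twice the clipped l1 distance. *)

Ltac destruct_Rabs_Rmax :=
  unfold Rabs, Rmax, Rmin in *;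
  repeat match goal with
  | |- context [Rcase_abs ?x] => destruct (Rcase_abs x)
  | H : context [Rcase_abs ?x] |- _ => destruct (Rcase_abs x)
  | |- context [Rle_dec ?a ?b] => destruct (Rle_dec a b)
  | H : context [Rle_dec ?a ?b] |- _ => destruct (Rle_dec a b)
  end.

(** * Finite sums and relabelings *)

(* [sumN N f = f 0 + ... + f (N - 1)], unlike [sum_f_R0 f N] which has [N + 1] terms. *)
Fixpoint sumN (N : nat) (f : nat -> R) : R :=
  match N with O => 0 | S n => sumN n f + f n end.

Lemma sumN_ext N f g : (forall i, (i < N)%nat -> f i = g i) -> sumN N f = sumN N g.
Proof.
  induction N as [|N IH]; intros Hfg; simpl; [reflexivity|].
  rewrite IH by (intros; apply Hfg; lia). rewrite Hfg by lia. reflexivity.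
Qed.

Lemma sumN_plus N f g : sumN N (fun i => f i + g i) = sumN N f + sumN N g.
Proof. induction N as [|N IH]; simpl; [|rewrite IH]; ring. Qed.

Lemma sumN_minus N f g : sumN N (fun i => f i - g i) = sumN N f - sumN N g.
Proof. induction N as [|N IH]; simpl; [|rewrite IH]; ring. Qed.

Lemma sumN_scal N c f : sumN N (fun i => c * f i) = c * sumN N f.
Proof. induction N as [|N IH]; simpl; [|rewrite IH]; ring. Qed.

Lemma sumN_le N f g : (forall i, (i < N)%nat -> f i <= g i) -> sumN N f <= sumN N g.
Proof.
  induction N as [|N IH]; intros Hfg; simpl; [lra|].
  apply Rplus_le_compat; [apply IH; intros; apply Hfg|apply Hfg]; lia.
Qed.

Lemma sumN_eq0 N f : (forall i, (i < N)%nat -> f i = 0) -> sumN N f = 0.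
Proof. intros Hf. rewrite (sumN_ext N f (fun _ => 0)) by exact Hf.
  clear Hf; induction N; simpl; lra.
Qed.

Lemma sumN_Rabs_same_sign N a :
  (forall i, (i < N)%nat -> 0 <= a i) \/ (forall i, (i < N)%nat -> a i <= 0) ->
  sumN N (fun i => Rabs (a i)) = Rabs (sumN N a).
Proof.
  intros [Hpos|Hneg].
  - rewrite Rabs_pos_eq.
    + apply sumN_ext; intros; apply Rabs_pos_eq; auto.
    + rewrite <- (sumN_eq0 N (fun _ => 0)) by auto. apply sumN_le; auto.
  - rewrite Rabs_left1.
    + rewrite (sumN_ext N _ (fun i => -1 * a i)), sumN_scal; [ring|].
      intros i Hi; rewrite Rabs_left1 by auto; ring.
    + rewrite <- (sumN_eq0 N (fun _ => 0)) by auto. apply sumN_le; auto.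
Qed.

Definition swap (a b i : nat) : nat :=
  if Nat.eqb i a then b else if Nat.eqb i b then a else i.

Lemma swap_involutive a b i : swap a b (swap a b i) = i.
Proof.
  unfold swap; destruct (Nat.eqb_spec i a), (Nat.eqb_spec i b);
    repeat (rewrite ?Nat.eqb_refl; try match goal with
      |- context [Nat.eqb ?x ?y] => destruct (Nat.eqb_spec x y) end); lia.
Qed.

Lemma swap_r a b : swap a b b = a.
Proof. unfold swap; destruct (Nat.eqb_spec b a); [lia|now rewrite Nat.eqb_refl]. Qed.

Lemma swap_le a N i : (a <= N)%nat -> (i <= N)%nat -> (swap a N i <= N)%nat.
Proof. unfold swap; destruct (Nat.eqb_spec i a), (Nat.eqb_spec i N); lia. Qed.

Lemma swap_gt a N i : (a <= N)%nat -> (N < i)%nat -> swap a N i = i.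
Proof. unfold swap; destruct (Nat.eqb_spec i a), (Nat.eqb_spec i N); lia. Qed.

Lemma sumN_update N a x phi : (a < N)%nat ->
  sumN N (fun i => if Nat.eqb i a then x else phi i) = sumN N phi - phi a + x.
Proof.
  induction N as [|N IH]; intros Ha; [lia|]. simpl.
  destruct (Nat.eqb_spec N a) as [->|Hne].
  - rewrite (sumN_ext a _ phi); [ring|].
    intros i Hi; destruct (Nat.eqb_spec i a); [lia|reflexivity].
  - rewrite IH by lia. ring.
Qed.

Lemma sumN_swap N a phi : (a <= N)%nat ->
  sumN (S N) (fun i => phi (swap a N i)) = sumN (S N) phi.
Proof.
  intros Ha. destruct (Nat.eq_dec a N) as [->|Hne].
  - apply sumN_ext; intros i _; unfold swap.
    destruct (Nat.eqb_spec i N); subst; reflexivity.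
  - simpl. rewrite swap_r.
    rewrite (sumN_ext N _ (fun i => if Nat.eqb i a then phi N else phi i)).
    + rewrite sumN_update by lia. ring.
    + intros i Hi; unfold swap; destruct (Nat.eqb_spec i a), (Nat.eqb_spec i N); auto; lia.
Qed.

Lemma sumN_perm N s : Bijective s -> (forall i, (N <= i)%nat -> s i = i) ->
  forall phi, sumN N (fun i => phi (s i)) = sumN N phi.
Proof.
  revert s; induction N as [|N IH]; intros s [g [Hgs Hsg]] Hfix phi; [reflexivity|].
  set (a := g N).
  assert (Ha : (a <= N)%nat).
  { destruct (Nat.le_gt_cases a N) as [|Hgt]; auto.
    specialize (Hsg N); rewrite Hfix in Hsg by (unfold a in Hgt; lia). lia. }
  set (t := fun i => s (swap a N i)).
  assert (HtN : t N = N) by (unfold t; rewrite swap_r; apply Hsg).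
  assert (Ht : sumN N (fun i => phi (t i)) = sumN N phi).
  { apply IH.
    - exists (fun y => swap a N (g y)); unfold t; split; intros;
        rewrite ?swap_involutive, ?Hgs, ?Hsg, ?swap_involutive; reflexivity.
    - intros i Hi. destruct (Nat.eq_dec i N) as [->|Hne]; [exact HtN|].
      unfold t; rewrite swap_gt, Hfix; lia. }
  transitivity (sumN (S N) (fun i => phi (t (swap a N i)))).
  - apply sumN_ext; intros i _; unfold t; rewrite swap_involutive; reflexivity.
  - rewrite (sumN_swap N a (fun i => phi (t i))) by exact Ha.
    simpl; rewrite Ht, HtN; reflexivity.
Qed.

Definition comonotone (N : nat) (u v : nat -> R) : Prop :=
  forall i j, (i < N)%nat -> (j < N)%nat -> u i < u j -> v i <= v j.

Lemma argmax_upto N (u : nat -> R) :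
  exists a, (a <= N)%nat /\ forall i, (i <= N)%nat -> u i <= u a.
Proof.
  induction N as [|N [a [Ha Hmax]]].
  - exists O; split; auto; intros i Hi; replace i with O by lia; lra.
  - destruct (Rle_dec (u a) (u (S N))).
    + exists (S N); split; auto; intros i Hi.
      destruct (Nat.eq_dec i (S N)) as [->|]; [lra|].
      specialize (Hmax i ltac:(lia)); lra.
    + exists a; split; [lia|]; intros i Hi.
      destruct (Nat.eq_dec i (S N)) as [->|]; [lra|apply Hmax; lia].
Qed.

(* Sorting both families: the largest [u] is matched with the largest [v], then recurse. *)
Lemma comonotone_relabeling N (u v : nat -> R) :
  exists s, Bijective s /\ (forall i, (N <= i)%nat -> s i = i) /\
    comonotone N u (fun i => v (s i)).
Proof.
  revert u v; induction N as [|N IH]; intros u v.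
  { exists (fun i => i); split; [exists (fun i => i); auto|split; [auto|intros i j Hi; lia]]. }
  destruct (argmax_upto N u) as [a [Ha Hua]], (argmax_upto N v) as [b [Hb Hvb]].
  destruct (IH (fun i => u (swap a N i)) (fun i => v (swap b N i)))
    as [s [[g [Hgs Hsg]] [Hfix Hmon]]].
  assert (HsN : s N = N) by (apply Hfix; lia).
  exists (fun i => swap b N (s (swap a N i))); split; [|split].
  - exists (fun y => swap a N (g (swap b N y))); split; intros;
      rewrite ?swap_involutive, ?Hgs, ?Hsg, ?swap_involutive; reflexivity.
  - intros i Hi; rewrite (swap_gt a N i), Hfix, swap_gt; lia.
  - intros i j Hi Hj Huij.
    set (i' := swap a N i); set (j' := swap a N j).
    assert (Ei : u i = u (swap a N i')) by (unfold i'; rewrite swap_involutive; auto).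
    assert (Ej : u j = u (swap a N j')) by (unfold j'; rewrite swap_involutive; auto).
    assert (Hi' : (i' <= N)%nat) by (apply swap_le; lia).
    assert (Hj' : (j' <= N)%nat) by (apply swap_le; lia).
    destruct (Nat.eq_dec i' N) as [Ei'|Ei'].
    { rewrite Ei', swap_r in Ei. specialize (Hua j ltac:(lia)). lra. }
    destruct (Nat.eq_dec j' N) as [Ej'|Ej'].
    { assert (Hsi' : (s i' < N)%nat).
      { destruct (Nat.lt_ge_cases (s i') N) as [|Hge]; auto.
        assert (s (s i') = s i') as Hss by (apply Hfix; lia).
        apply (f_equal g) in Hss; rewrite !Hgs in Hss; lia. }
      rewrite Ej', HsN, swap_r. apply Hvb, swap_le; lia. }
    apply (Hmon i' j'); try lia. rewrite <- Ei, <- Ej; exact Huij.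
Qed.

Lemma sum_f_R0_sumN f n : sum_f_R0 f n = sumN (S n) f.
Proof. induction n as [|n IH]; simpl; [ring|rewrite IH; reflexivity]. Qed.

Lemma sumN_vanishing_tail f N M : (N <= M)%nat -> (forall i, (N <= i)%nat -> f i = 0) ->
  sumN M f = sumN N f.
Proof.
  intros HNM Hz; induction M as [|M IH]; [replace N with O by lia; reflexivity|].
  destruct (Nat.eq_dec N (S M)) as [->|]; [reflexivity|].
  simpl; rewrite IH, Hz by lia; ring.
Qed.

Lemma infinite_sum_finite f N : (forall i, (N <= i)%nat -> f i = 0) ->
  infinite_sum f (sumN N f).
Proof.
  intros Hz eps Heps; exists N; intros n Hn.
  rewrite sum_f_R0_sumN, (sumN_vanishing_tail f N) by (auto; lia).
  unfold Rdist; rewrite Rminus_diag, Rabs_R0; lra.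
Qed.

Lemma infinite_sum_scal_r f l c : infinite_sum f l -> infinite_sum (fun k => f k * c) (l * c).
Proof.
  intros H; apply (Un_cv_ext (fun n => sum_f_R0 f n * c)).
  - intros n; rewrite Rmult_comm, scal_sum; reflexivity.
  - apply CV_mult; [exact H|].
    intros eps Heps; exists O; intros; unfold Rdist; rewrite Rminus_diag, Rabs_R0; lra.
Qed.

Lemma infinite_sum_sumN M (h : nat -> nat -> R) (t : nat -> R) :
  (forall i, (i < M)%nat -> infinite_sum (h i) (t i)) ->
  infinite_sum (fun k => sumN M (fun i => h i k)) (sumN M t).
Proof.
  induction M as [|M IH]; intros H; simpl.
  - apply (infinite_sum_finite (fun _ => 0) O); auto.
  - apply (Un_cv_ext (fun n => sum_f_R0 (fun k => sumN M (fun i => h i k)) n + sum_f_R0 (h M) n)).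
    + intros n; rewrite <- sum_plus; reflexivity.
    + apply CV_plus; [apply IH; intros|]; apply H; lia.
Qed.

Lemma sum_f_R0_ge_term f k n : (forall i, 0 <= f i) -> (k <= n)%nat -> f k <= sum_f_R0 f n.
Proof.
  intros Hf Hk; induction n as [|n IH].
  - replace k with O by lia; simpl; lra.
  - simpl; destruct (Nat.eq_dec k (S n)) as [->|].
    + pose proof (cond_pos_sum f n Hf); lra.
    + specialize (IH ltac:(lia)); specialize (Hf (S n)); lra.
Qed.

Lemma infinite_sum_0_nonneg f k : (forall i, 0 <= f i) -> infinite_sum f 0 -> f k = 0.
Proof.
  intros Hf Hs; destruct (Rle_lt_or_eq_dec 0 (f k) (Hf k)) as [Hk|]; [exfalso|auto].
  destruct (Hs (f k) Hk) as [N HN]; specialize (HN (max N k) ltac:(lia)).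
  pose proof (sum_f_R0_ge_term f k (max N k) Hf ltac:(lia)).
  unfold Rdist in HN; rewrite Rminus_0_r, Rabs_pos_eq in HN by lra; lra.
Qed.

Lemma distribution_le_1 p : distribution p -> forall i, p i <= 1.
Proof.
  intros [Hp Hs] i.
  apply Rle_cv_lim with (Un := fun _ => p i) (Vn := fun n => sum_f_R0 p (n + i)).
  - intros n; apply sum_f_R0_ge_term; auto; lia.
  - intros eps Heps; exists O; intros; unfold Rdist; rewrite Rminus_diag, Rabs_R0; lra.
  - apply CV_shift'; exact Hs.
Qed.

Lemma distribution_tail_lt p tau : 0 < tau -> distribution p ->
  exists N, forall i, (N <= i)%nat -> p i < tau.
Proof.
  intros Htau [Hp Hs]; destruct (Hs (tau / 2) ltac:(lra)) as [N HN].
  exists (S N); intros [|k] Hk; [lia|].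
  pose proof (HN k ltac:(lia)) as H1; pose proof (HN (S k) ltac:(lia)) as H2.
  simpl in H2; unfold Rdist in *; destruct_Rabs_Rmax; lra.
Qed.

(** * The dual potential of a sorted matching *)

Definition count_gt (f : R) (l : list R) : nat :=
  length (filter (fun x => if Rlt_dec f x then true else false) l).

Lemma count_gt_antitone f f' l : f <= f' -> (count_gt f' l <= count_gt f l)%nat.
Proof.
  intros Hff; induction l as [|x l IH]; unfold count_gt in *; simpl; [lia|].
  destruct (Rlt_dec f' x), (Rlt_dec f x); simpl; lra || lia.
Qed.

Lemma count_gt_lt f f' l : f < f' -> In f' l -> (count_gt f' l < count_gt f l)%nat.
Proof.
  intros Hff Hin; induction l as [|x l IH]; [destruct Hin|].
  pose proof (count_gt_antitone f f' l (Rlt_le _ _ Hff)).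
  unfold count_gt in *; simpl in *.
  destruct Hin as [->|Hin].
  - destruct (Rlt_dec f' f'), (Rlt_dec f f'); simpl; lra || lia.
  - specialize (IH Hin); destruct (Rlt_dec f' x), (Rlt_dec f x); simpl; lra || lia.
Qed.

Lemma next_value_above l f : (exists x, In x l /\ f < x) ->
  exists m, In m l /\ f < m /\ forall x, In x l -> f < x -> m <= x.
Proof.
  induction l as [|a l IH]; intros [x [Hx Hfx]]; [destruct Hx|].
  destruct (classic (exists y, In y l /\ f < y)) as [Hy|Hy].
  - destruct (IH Hy) as [m [Hm [Hfm Hmin]]].
    destruct (Rlt_dec f a) as [Ha|Ha]; [destruct (Rle_dec a m)|].
    + exists a; split; [left; auto|split; auto].
      intros y [<-|Hy'] Hfy; [lra|specialize (Hmin y Hy' Hfy); lra].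
    + exists m; split; [right; auto|split; auto]. intros y [<-|Hy'] Hfy; [lra|auto].
    + exists m; split; [right; auto|split; auto]. intros y [<-|Hy'] Hfy; [lra|auto].
  - destruct Hx as [->|Hx]; [|exfalso; apply Hy; eauto].
    exists x; split; [left; auto|split; auto].
    intros y [<-|Hy'] Hfy; [lra|exfalso; apply Hy; eauto].
Qed.

Definition log_lipschitz_from (f : R) (G : R -> R) : Prop :=
  forall x y, f <= x -> f <= y -> Rabs (G x - G y) <= Rabs (ln x - ln y).

Lemma ln_le_compat a b : 0 < a -> a <= b -> ln a <= ln b.
Proof.
  intros Ha Hab; destruct (Req_dec a b) as [->|]; [lra|].
  left; apply ln_increasing; lra.
Qed.

Lemma relative_gap_le_ln f f' : 0 < f -> f < f' -> (f' - f) / f' <= ln f' - ln f.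
Proof.
  intros Hf Hff.
  pose proof (exp_ineq1_le (ln (f / f'))) as H.
  rewrite exp_ln in H by (apply Rdiv_lt_0_compat; lra).
  unfold Rdiv in H; rewrite ln_mult, ln_Rinv in H by (try apply Rinv_0_lt_compat; lra).
  replace ((f' - f) / f') with (1 - f * / f') by (field; lra). lra.
Qed.

(* With [r = (f' - f) / f'] the moved excess [(f' - f) D] equals [r (E - S')], so the new
   excess [S' + (f' - f) D = (1 - r) S' + r E] is a convex combination of [S'] and [E]. *)
Lemma level_step_ineq f f' D S' E L : 0 < f -> f < f' -> E = f' * D + S' ->
  (f' - f) / f' <= L ->
  (f' - f) * Rabs D + Rabs (S' + (f' - f) * D) <= Rabs S' + 2 * L * Rabs E.
Proof.
  intros Hf Hff HE HL.
  set (r := (f' - f) / f').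
  assert (Hr : 0 < r < 1).
  { unfold r; split; [apply Rdiv_lt_0_compat; lra|].
    apply (Rmult_lt_reg_r f'); [lra|]. unfold Rdiv; rewrite Rmult_assoc, Rinv_l; lra. }
  assert (HD : (f' - f) * D = r * (E - S')) by (unfold r; rewrite HE; field; lra).
  rewrite <- (Rabs_pos_eq (f' - f)) at 1 by lra.
  rewrite <- Rabs_mult, HD.
  replace (S' + r * (E - S')) with ((1 - r) * S' + r * E) by ring.
  assert (Rabs (r * (E - S')) <= r * Rabs E + r * Rabs S').
  { rewrite Rabs_mult, Rabs_pos_eq by lra.
    pose proof (Rabs_triang E (- S')) as Htri; rewrite Rabs_Ropp in Htri.
    unfold Rminus; nra. }
  assert (Rabs ((1 - r) * S' + r * E) <= (1 - r) * Rabs S' + r * Rabs E).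
  { eapply Rle_trans; [apply Rabs_triang|].
    rewrite !Rabs_mult, (Rabs_pos_eq r), (Rabs_pos_eq (1 - r)) by lra; lra. }
  assert (r * Rabs E <= L * Rabs E) by (apply Rmult_le_compat_r; [apply Rabs_pos|exact HL]).
  lra.
Qed.

Section LevelStep.
Variables f f' : R.
Hypotheses (f_pos : 0 < f) (f_lt : f < f').

Definition above (a : R) : R := if Rle_dec f' a then 1 else 0.

Lemma Rmax_level_split a : a <= f \/ f' <= a ->
  Rmax a f = Rmax a f' - (f' - f) * (1 - above a).
Proof. intros Ha; unfold above; destruct Ha; destruct_Rabs_Rmax; lra. Qed.

Lemma Rabs_level_split a b : a <= f \/ f' <= a -> b <= f \/ f' <= b ->
  Rabs (Rmax a f - Rmax b f) =
  Rabs (Rmax a f' - Rmax b f') + (f' - f) * Rabs (above a - above b).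
Proof. intros Ha Hb; unfold above; destruct Ha, Hb; destruct_Rabs_Rmax; lra. Qed.

Lemma mul_above a : a * above a = f' * above a + (Rmax a f' - f').
Proof. unfold above; destruct_Rabs_Rmax; lra. Qed.

Lemma potential_level_split a s G' : G' f' = 0 -> a <= f \/ f' <= a ->
  Rmax a f * (s * (ln (Rmin (Rmax a f) f') - ln f) + G' (Rmax (Rmax a f) f')) =
  Rmax a f' * G' (Rmax a f') + s * (ln f' - ln f) * (a * above a).
Proof.
  intros HG [Ha|Ha]; unfold above.
  - rewrite (Rmax_right a f), (Rmin_left f f'), (Rmax_right f f'), (Rmax_right a f') by lra.
    destruct (Rle_dec f' a); [lra|]. rewrite HG; ring.
  - rewrite (Rmax_left a f), (Rmin_right a f'), (Rmax_left a f') by lra.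
    destruct (Rle_dec f' a); [ring|lra].
Qed.

Lemma log_lipschitz_extend s G' : s = 1 \/ s = -1 -> log_lipschitz_from f' G' ->
  log_lipschitz_from f (fun x => s * (ln (Rmin x f') - ln f) + G' (Rmax x f')).
Proof.
  intros Hs HG' x y Hx Hy.
  pose proof (HG' (Rmax x f') (Rmax y f') (Rmax_r _ _) (Rmax_r _ _)) as HG.
  replace (s * (ln (Rmin x f') - ln f) + G' (Rmax x f') - (s * (ln (Rmin y f') - ln f) + G' (Rmax y f')))
    with (s * (ln (Rmin x f') - ln (Rmin y f')) + (G' (Rmax x f') - G' (Rmax y f'))) by ring.
  eapply Rle_trans; [apply Rabs_triang|].
  assert (Rabs s = 1) as Hs1 by (destruct Hs as [->| ->]; destruct_Rabs_Rmax; lra).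
  rewrite Rabs_mult, Hs1, Rmult_1_l.
  destruct (Rle_dec x f'), (Rle_dec y f').
  - rewrite (Rmin_left x), (Rmin_left y), (Rmax_right x), (Rmax_right y) in * by lra.
    rewrite Rminus_diag, Rabs_R0 in *; lra.
  - rewrite (Rmin_left x), (Rmin_right y), (Rmax_right x), (Rmax_left y) in * by lra.
    pose proof (ln_le_compat x f' ltac:(lra) ltac:(lra)); pose proof (ln_le_compat f' y ltac:(lra) ltac:(lra)).
    destruct_Rabs_Rmax; lra.
  - rewrite (Rmin_right x), (Rmin_left y), (Rmax_left x), (Rmax_right y) in * by lra.
    pose proof (ln_le_compat y f' ltac:(lra) ltac:(lra)); pose proof (ln_le_compat f' x ltac:(lra) ltac:(lra)).
    destruct_Rabs_Rmax; lra.
  - rewrite (Rmin_right x), (Rmin_right y), (Rmax_left x), (Rmax_left y) in * by lra.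
    rewrite Rminus_diag, Rabs_R0 in *; lra.
Qed.
End LevelStep.

Section SortedMatching.
Variables (N : nat) (u v : nat -> R).
Hypothesis uv_comonotone : comonotone N u v.

Definition clipped_l1 (f : R) : R := sumN N (fun i => Rabs (Rmax (u i) f - Rmax (v i) f)).

Definition clipped_excess (f : R) : R := sumN N (fun i => Rmax (u i) f - Rmax (v i) f).

Definition potential_gap (G : R -> R) (f : R) : R :=
  sumN N (fun i => Rmax (u i) f * G (Rmax (u i) f) - Rmax (v i) f * G (Rmax (v i) f)).

Definition certifies (f : R) (G : R -> R) : Prop :=
  G f = 0 /\ log_lipschitz_from f G /\
  clipped_l1 f + Rabs (clipped_excess f) <= 2 * potential_gap G f.

Lemma certifies_above_all f : (forall i, (i < N)%nat -> u i <= f /\ v i <= f) ->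
  certifies f (fun _ => 0).
Proof.
  intros Hle; split; [reflexivity|split].
  - intros x y _ _; rewrite Rminus_0_r, Rabs_R0; apply Rabs_pos.
  - unfold clipped_l1, clipped_excess, potential_gap.
    rewrite !sumN_eq0; [rewrite Rabs_R0; lra| | |]; intros i Hi; destruct (Hle i Hi);
      rewrite !Rmax_right by assumption; rewrite ?Rminus_diag, ?Rabs_R0; ring.
Qed.

Lemma above_diff_same_sign f' :
  (forall i, (i < N)%nat -> 0 <= above f' (u i) - above f' (v i)) \/
  (forall i, (i < N)%nat -> above f' (u i) - above f' (v i) <= 0).
Proof.
  destruct (classic (exists i, (i < N)%nat /\ u i < f' <= v i)) as [[i [Hi Hiv]]|Hno].
  - right; intros j Hj; unfold above.
    destruct (Rle_dec f' (u j)), (Rle_dec f' (v j)); try lra.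
    assert (v i <= v j) by (apply uv_comonotone; auto; lra). lra.
  - left; intros j Hj; unfold above.
    destruct (Rle_dec f' (u j)), (Rle_dec f' (v j)); try lra.
    exfalso; apply Hno; exists j; split; [auto|lra].
Qed.

(* Between two consecutive levels [f < f'] the potential moves by [ln] with the sign of the
   mass [E] lying above [f']. *)
Lemma certifies_step f f' G' : 0 < f -> f < f' ->
  (forall i, (i < N)%nat -> (u i <= f \/ f' <= u i) /\ (v i <= f \/ f' <= v i)) ->
  certifies f' G' -> exists G, certifies f G.
Proof.
  intros Hf Hff Hgap [HG'0 [HG'lip HG']].
  set (D := sumN N (fun i => above f' (u i) - above f' (v i))).
  set (E := sumN N (fun i => u i * above f' (u i) - v i * above f' (v i))).
  set (s := if Rle_dec 0 E then 1 else -1).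
  set (L := ln f' - ln f).
  set (G := fun x => s * (ln (Rmin x f') - ln f) + G' (Rmax x f')).
  exists G; split; [|split].
  - unfold G; rewrite Rmin_left, Rmax_right, HG'0 by lra; ring.
  - apply log_lipschitz_extend; auto. unfold s; destruct (Rle_dec 0 E); auto.
  - assert (Hexcess : clipped_excess f = clipped_excess f' + (f' - f) * D).
    { unfold clipped_excess, D; rewrite <- sumN_scal, <- sumN_plus.
      apply sumN_ext; intros i Hi; destruct (Hgap i Hi).
      rewrite (Rmax_level_split f f' Hff (u i)), (Rmax_level_split f f' Hff (v i)) by auto; ring. }
    assert (HE : E = f' * D + clipped_excess f').
    { unfold E, D, clipped_excess; rewrite <- sumN_scal, <- sumN_plus.
      apply sumN_ext; intros i _; rewrite !mul_above; ring. }
    assert (Hl1 : clipped_l1 f = clipped_l1 f' + (f' - f) * Rabs D).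
    { unfold D; rewrite <- sumN_Rabs_same_sign by apply above_diff_same_sign.
      unfold clipped_l1; rewrite <- sumN_scal, <- sumN_plus.
      apply sumN_ext; intros i Hi; destruct (Hgap i Hi); apply Rabs_level_split; auto. }
    assert (Hpot : potential_gap G f = potential_gap G' f' + s * L * E).
    { unfold potential_gap, E, G; rewrite <- sumN_scal, <- sumN_plus.
      apply sumN_ext; intros i Hi; destruct (Hgap i Hi).
      rewrite !(potential_level_split f f' Hff) by auto; unfold L; ring. }
    assert (HsE : s * L * E = L * Rabs E).
    { unfold s; destruct (Rle_dec 0 E); [rewrite Rabs_pos_eq|rewrite Rabs_left]; lra || ring. }
    pose proof (level_step_ineq f f' D (clipped_excess f') E L Hf Hff HE
                  (relative_gap_le_ln f f' Hf Hff)).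
    rewrite Hpot, Hl1, Hexcess; lra.
Qed.

Definition values : list R := map u (seq 0 N) ++ map v (seq 0 N).

Lemma In_values i : (i < N)%nat -> In (u i) values /\ In (v i) values.
Proof.
  intros Hi; unfold values; split; apply in_or_app; [left|right];
    apply in_map, in_seq; lia.
Qed.

Theorem certificate_exists f : 0 < f -> exists G, certifies f G.
Proof.
  remember (count_gt f values) as n eqn:Hn; revert f Hn.
  induction n as [n IH] using (well_founded_induction Wf_nat.lt_wf); intros f Hn Hf.
  destruct (classic (exists x, In x values /\ f < x)) as [Habove|Hnone].
  - destruct (next_value_above values f Habove) as [f' [Hin [Hff Hmin]]].
    destruct (IH (count_gt f' values)) with f' as [G' HG'];
      [subst; apply count_gt_lt; auto|reflexivity|lra|].
    apply (certifies_step f f' G'); auto.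
    intros i Hi; destruct (In_values i Hi) as [Hu Hv].
    split; [destruct (Rle_dec (u i) f)|destruct (Rle_dec (v i) f)];
      try (left; assumption); right; apply Hmin; auto; lra.
  - exists (fun _ => 0); apply certifies_above_all.
    intros i Hi; destruct (In_values i Hi).
    split; apply Rnot_lt_le; intros Hlt; apply Hnone; eauto.
Qed.
End SortedMatching.

(** * Weak duality for transport schemes *)

Section Marginal.
Variables (p : nat -> R) (N : nat) (tau : R) (G : R -> R).
Hypotheses (tau_pos : 0 < tau) (p_tail : forall i, (N <= i)%nat -> p i < tau)
  (p_le_1 : forall i, p i <= 1) (G_tau : G tau = 0).

Definition level_set (x : R) : list nat :=
  filter (fun j => if Req_EM_T (p j) x then true else false) (seq 0 N).

Lemma sumN_level_indicator x c :
  sumN N (fun i => if Req_EM_T (p i) x then c else 0) = INR (length (level_set x)) * c.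
Proof.
  unfold level_set; clear p_tail; induction N as [|M IH]; [simpl; ring|].
  rewrite seq_S, filter_app, length_app, plus_INR; cbn [sumN]; rewrite IH; simpl.
  destruct (Req_EM_T (p M) x); simpl; ring.
Qed.

Lemma hist_level_set x : tau < x -> hist p x (length (level_set x)).
Proof.
  intros Hx; exists (level_set x); split; [apply NoDup_filter, seq_NoDup|split; auto].
  intros a; unfold level_set; rewrite filter_In, in_seq; split.
  - intros [_ H]; destruct (Req_EM_T (p a) x); [auto|discriminate].
  - intros H; destruct (Nat.lt_ge_cases a N) as [Ha|Ha].
    + split; [lia|]; destruct (Req_EM_T (p a) x); [reflexivity|contradiction].
    + specialize (p_tail a Ha); lra.
Qed.

Lemma level_set_size_pos j : (j < N)%nat -> 0 < INR (length (level_set (p j))).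
Proof.
  intros Hj; apply lt_0_INR.
  assert (Hin : In j (level_set (p j))).
  { unfold level_set; apply filter_In; split; [apply in_seq; lia|].
    destruct (Req_EM_T (p j) (p j)); [reflexivity|contradiction]. }
  destruct (level_set (p j)); [destruct Hin|simpl; lia].
Qed.

Variables sx w : nat -> R.
Hypotheses (w_sx_range : forall k, 0 <= w k /\ 0 < sx k <= 1)
  (sx_marginal : forall x n, 0 < x <= 1 -> hist p x n ->
     infinite_sum (fun k => if Req_EM_T (sx k) x then w k else 0) (x * INR n)).

Lemma scheme_weight_off_support k : tau < sx k ->
  (forall j, (j < N)%nat -> p j <> sx k) -> w k = 0.
Proof.
  intros Hk Hnot.
  assert (Hh : hist p (sx k) 0).
  { exists nil; split; [constructor|split; [reflexivity|]].
    intros a; split; [intros []|intros Ha].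
    destruct (Nat.lt_ge_cases a N) as [Ha'|Ha']; [exact (Hnot a Ha' Ha)|].
    specialize (p_tail a Ha'); lra. }
  pose proof (sx_marginal (sx k) O (proj2 (w_sx_range k)) Hh) as Hsum.
  rewrite Rmult_0_r in Hsum.
  apply (infinite_sum_0_nonneg _ k) in Hsum.
  - cbv beta in Hsum; destruct (Req_EM_T (sx k) (sx k)); [exact Hsum|contradiction].
  - intros i; destruct (Req_EM_T (sx i) (sx k)); [apply w_sx_range|lra].
Qed.

(* Index [i] with [p i > tau] receives the share [1 / h_p(p i)] of the mass leaving the
   level [p i]. *)
Definition level_share (i k : nat) : R :=
  if Rlt_dec tau (p i) then
    (if Req_EM_T (sx k) (p i) then w k else 0) * (G (p i) / INR (length (level_set (p i))))
  else 0.

Lemma level_share_column k : w k * G (Rmax (sx k) tau) = sumN N (fun i => level_share i k).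
Proof.
  destruct (w_sx_range k) as [Hwk Hsk].
  destruct (Rle_dec (sx k) tau) as [Hs|Hs].
  { rewrite Rmax_right, G_tau, Rmult_0_r by exact Hs.
    symmetry; apply sumN_eq0; intros i Hi; unfold level_share.
    destruct (Rlt_dec tau (p i)); [|reflexivity].
    destruct (Req_EM_T (sx k) (p i)); [lra|ring]. }
  destruct (classic (exists j, (j < N)%nat /\ p j = sx k)) as [[j [Hj Hpj]]|Hnone].
  - rewrite (sumN_ext N _ (fun i => if Req_EM_T (p i) (sx k)
        then w k * (G (sx k) / INR (length (level_set (sx k)))) else 0)).
    + pose proof (level_set_size_pos j Hj) as Hpos; rewrite Hpj in Hpos.
      rewrite sumN_level_indicator, Rmax_left by lra. field; lra.
    + intros i Hi; unfold level_share.
      destruct (Req_EM_T (p i) (sx k)) as [Heq|Hne].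
      * rewrite Heq; destruct (Rlt_dec tau (sx k)); [|lra].
        destruct (Req_EM_T (sx k) (sx k)); [ring|contradiction].
      * destruct (Rlt_dec tau (p i)); [|reflexivity].
        destruct (Req_EM_T (sx k) (p i)); [congruence|ring].
  - rewrite (scheme_weight_off_support k) by (lra || (intros j Hj Hpj; eauto)).
    rewrite Rmult_0_l; symmetry; apply sumN_eq0; intros i Hi; unfold level_share.
    destruct (Rlt_dec tau (p i)); [|reflexivity].
    destruct (Req_EM_T (sx k) (p i)); [exfalso; eauto|ring].
Qed.

Lemma level_share_row i : (i < N)%nat ->
  infinite_sum (fun k => level_share i k) (Rmax (p i) tau * G (Rmax (p i) tau)).
Proof.
  intros Hi; unfold level_share; destruct (Rlt_dec tau (p i)) as [Hlt|Hge].
  - pose proof (level_set_size_pos i Hi) as Hpos.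
    rewrite Rmax_left by lra.
    replace (p i * G (p i)) with
      (p i * INR (length (level_set (p i))) * (G (p i) / INR (length (level_set (p i)))))
      by (field; lra).
    apply infinite_sum_scal_r, sx_marginal; [split; [lra|apply p_le_1]|].
    apply hist_level_set; exact Hlt.
  - rewrite Rmax_right, G_tau, Rmult_0_r by lra.
    apply (infinite_sum_finite (fun _ => 0) O); auto.
Qed.

Lemma scheme_potential_marginal :
  infinite_sum (fun k => w k * G (Rmax (sx k) tau))
    (sumN N (fun i => Rmax (p i) tau * G (Rmax (p i) tau))).
Proof.
  apply (Un_cv_ext (sum_f_R0 (fun k => sumN N (fun i => level_share i k)))).
  - intros n; apply sum_eq; intros k _; symmetry; apply level_share_column.
  - apply infinite_sum_sumN; exact level_share_row.
Qed.
End Marginal.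

Lemma potential_gap_le_scheme_cost p1 p2 N tau G sx sy w c : 0 < tau ->
  (forall i, (N <= i)%nat -> p1 i < tau) -> (forall i, (N <= i)%nat -> p2 i < tau) ->
  (forall i, p1 i <= 1) -> (forall i, p2 i <= 1) ->
  G tau = 0 -> log_lipschitz_from tau G ->
  scheme_ok p1 p2 sx sy w -> scheme_cost tau sx sy w c ->
  sumN N (fun i => Rmax (p1 i) tau * G (Rmax (p1 i) tau)) -
  sumN N (fun i => Rmax (p2 i) tau * G (Rmax (p2 i) tau)) <= c.
Proof.
  intros Htau T1 T2 L1 L2 HG0 HGlip [Hw [H1 H2]] Hc.
  pose proof (scheme_potential_marginal p1 N tau G Htau T1 L1 HG0 sx w
    ltac:(intros k; destruct (Hw k) as [? [? ?]]; auto) H1) as M1.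
  pose proof (scheme_potential_marginal p2 N tau G Htau T2 L2 HG0 sy w
    ltac:(intros k; destruct (Hw k) as [? [? ?]]; auto) H2) as M2.
  apply Rle_cv_lim with
    (Un := sum_f_R0 (fun k => w k * G (Rmax (sx k) tau) - w k * G (Rmax (sy k) tau)))
    (Vn := sum_f_R0 (fun k => w k * move_cost tau (sx k) (sy k))).
  - intros n; apply sum_Rle; intros k _; destruct (Hw k) as [Hwk _].
    rewrite <- Rmult_minus_distr_l; apply Rmult_le_compat_l; [exact Hwk|].
    eapply Rle_trans; [apply Rle_abs|apply HGlip; apply Rmax_r].
  - apply (Un_cv_ext (fun n => sum_f_R0 (fun k => w k * G (Rmax (sx k) tau)) n -
                               sum_f_R0 (fun k => w k * G (Rmax (sy k) tau)) n)).
    + intros n; rewrite minus_sum; reflexivity.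
    + apply CV_minus; assumption.
  - exact Hc.
Qed.

Theorem fact1 (tau eps : R) (p1 p2 : nat -> R) :
  0 < tau <= 1 ->
  distribution p1 -> distribution p2 ->
  inf_many_zeros p1 -> inf_many_zeros p2 ->
  R_tau_le tau p1 p2 eps ->
  exists pi : nat -> nat, Bijective pi /\
    exists S : R,
      infinite_sum (fun i => Rabs (Rmax (p1 i) tau - Rmax (p2 (pi i)) tau)) S /\
      S <= 2 * eps.
Proof.
  intros [Htau _] D1 D2 _ _ Hscheme.
  destruct (distribution_tail_lt p1 tau Htau D1) as [N1 T1].
  destruct (distribution_tail_lt p2 tau Htau D2) as [N2 T2].
  set (N := max N1 N2).
  destruct (comonotone_relabeling N p1 p2) as [s [Hbij [Hfix Hmon]]].
  destruct (certificate_exists N p1 (fun i => p2 (s i)) Hmon tau Htau)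
    as [G [HG0 [HGlip Hcert]]].
  assert (Hgap : potential_gap N p1 (fun i => p2 (s i)) G tau <= eps).
  { apply Rle_plus_epsilon; intros delta Hdelta.
    destruct (Hscheme delta Hdelta) as [sx [sy [w [c [Hok [Hc Hce]]]]]].
    unfold potential_gap; rewrite sumN_minus.
    rewrite (sumN_perm N s Hbij Hfix (fun j => Rmax (p2 j) tau * G (Rmax (p2 j) tau))).
    pose proof (potential_gap_le_scheme_cost p1 p2 N tau G sx sy w c Htau
      ltac:(intros; apply T1; lia) ltac:(intros; apply T2; lia)
      (distribution_le_1 p1 D1) (distribution_le_1 p2 D2) HG0 HGlip Hok Hc).
    lra. }
  exists s; split; [exact Hbij|].
  exists (clipped_l1 N p1 (fun i => p2 (s i)) tau); split.
  - apply infinite_sum_finite; intros i Hi; rewrite Hfix by exact Hi.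
    rewrite (Rmax_right (p1 i)), (Rmax_right (p2 i)) by (left; (apply T1 || apply T2); lia).
    rewrite Rminus_diag; apply Rabs_R0.
  - pose proof (Rabs_pos (clipped_excess N p1 (fun i => p2 (s i)) tau)); lra.
Qed.
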